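(* Let $k$ be a field containing all $m$-th roots of unity, with $p\nmid m$ if $\operatorname{char}(k)=p>0$. Let $\mathcal A$ be a perfect $k$-algebra, $S$ a commutative associative unital $k$-algebra, $\sigma_1\in\operatorname{Aut}(\mathcal A)$, $\sigma_2\in\operatorname{Aut}(S)$ with $\sigma_1^m=\mathrm{id}$, $\sigma_2^m=\mathrm{id}$, and suppose $S_{\bar 1}$ contains an invertible element $u$ of $S$. Let $d\in\mathcal D((\mathcal A\otimes S)_{\bar 0})$, $i,j,s,t\in\mathbb Z$, $a_{\bar i}\in\mathcal A_{\bar i}$, $a_{\bar j}\in\mathcal A_{\bar j}$, $b_{-\bar i+\bar s}\in S_{-\bar i+\bar s}$, $b_{-\bar j+\bar t}\in S_{-\bar j+\bar t}$. Then $$\big[u^{-m+s}d(a_{\bar i}\otimes u^{-s+m}b_{-\bar i+\bar s})-u^{s}d(a_{\bar i}\otimes u^{-s}b_{-\bar i+\bar s})\big](a_{\bar j}\otimes b_{-\bar j+\bar t}) =(a_{\bar i}\otimes b_{-\bar i+\bar s})\big[u^{-m+t}d(a_{\bar j}\otimes u^{-t+m}b_{-\bar j+\bar t})-u^{t}d(a_{\bar j}\otimes u^{-t}b_{-\bar j+\bar t})\big].$$ In particular, $$(a_{\bar i}\otimes u^{-i})\big[u^{-m+j}d(a_{\bar j}\otimes u^{-j+m})-d(a_{\bar j}\otimes u^{-j})u^{j}\big]u^{-j}=\big[u^{-m+i}d(a_{\bar i}\otimes u^{-i+m})-d(a_{\bar i}\otimes u^{-i})u^{i}\big]u^{-i}(a_{\bar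 j}\otimes u^{-j}),$$ and $$(a_{\bar i}\otimes 1)\big[u^{-m+t}d(a_{\bar j}\otimes u^{-t+m}b_{-\bar j+\bar t})-d(a_{\bar j}\otimes u^{-t}b_{-\bar j+\bar t})u^{t}\big]=\big[u^{-m+i}d(a_{\bar i}\otimes u^{-i+m})-d(a_{\bar i}\otimes u^{-i})u^{i}\big](a_{\bar j}\otimes b_{-\bar j+\bar t}).$$
   Context: Algebras are $k$-vector spaces with bilinear product (not necessarily associative); perfect means $\mathcal A\mathcal A=\mathcal A$; $\mathcal D$ denotes derivations. Fix a primitive $m$-th root of unity $\omega$; $\mathcal A_{\bar i}=\{a\mid\sigma_1(a)=\omega^ia\}$, $S_{\bar i}=\{s\mid\sigma_2(s)=\omega^is\}$, and $(\mathcal A\otimes S)_{\bar 0}=\sum_{\bar j}\mathcal A_{-\bar j}\otimes S_{\bar j}$ is the fixed-point subalgebra of $\sigma_1\otimes\sigma_2$ (product $(a\otimes s)(a'\otimes s')=aa'\otimes ss'$). $\mathcal A\otimes S$ is an $S$-bimodule via $s'(a\otimes s)=(a\otimes s)s'=a\otimes ss'$, and products of elements of $S$ with elements of $\mathcal A\otimes S$ denote this action. *)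

From HB Require Import structures.
From mathcomp Require Import all_boot all_order all_algebra.
Set Implicit Arguments. Unset Strict Implicit. Unset Printing Implicit Defensive.
Import GRing.Theory.
Local Open Scope ring_scope.

Definition lin (k : fieldType) (U V : lmodType k) (f : U -> V) : Prop :=
  forall (c : k) (x y : U), f (c *: x + y) = c *: f x + f y.

Definition bilin (k : fieldType) (U V W : lmodType k) (f : U -> V -> W) : Prop :=
  (forall v, lin (fun u => f u v)) /\ (forall u, lin (f u)).

Definition is_tensor_product (k : fieldType) (A S T : lmodType k)
  (tens : A -> S -> T) : Prop :=
  bilin tens /\
  forall (W : lmodType k) (f : A -> S -> W), bilin f ->
    exists! g : T -> W, lin g /\ forall a s, g (tens a s) = f a s.

Definition perfect (k : fieldType) (A : lmodType k) (mulA : A -> A -> A) : Prop :=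
  forall a : A, exists r : seq (A * A), a = \sum_(p <- r) mulA p.1 p.2.

Definition is_alg_aut (k : fieldType) (A : lmodType k) (mulA : A -> A -> A)
  (sg : A -> A) : Prop :=
  lin sg /\ bijective sg /\ forall x y, sg (mulA x y) = mulA (sg x) (sg y).

Definition is_unital_alg_aut (k : fieldType) (S : comUnitAlgType k)
  (sg : S -> S) : Prop :=
  lin sg /\ bijective sg /\ (forall x y, sg (x * y) = sg x * sg y) /\ sg 1 = 1.

(* homogeneous component of degree \bar i : sg x = omega^i x *)
Definition homog (k : fieldType) (V : lmodType k) (sg : V -> V) (omega : k)
  (i : int) (x : V) : Prop := sg x = (omega ^ i) *: x.

(* membership in the fixed-point subalgebra (A (x) S)_0 = sum_j A_{-j} (x) S_j *)
Definition in_fixed (k : fieldType) (A : lmodType k) (S : comUnitAlgType k)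
  (T : lmodType k) (tens : A -> S -> T) (s1 : A -> A) (s2 : S -> S) (omega : k)
  (x : T) : Prop :=
  exists r : seq (int * A * S),
    (forall p, p \in r -> homog s1 omega (- p.1.1) p.1.2 /\ homog s2 omega p.1.1 p.2)
    /\ x = \sum_(p <- r) tens p.1.2 p.2.

(* d (a function T -> T) restricts to a derivation of the subalgebra B
   (only its values on B matter) *)
Definition is_der_on (k : fieldType) (T : lmodType k) (mulT : T -> T -> T)
  (B : T -> Prop) (d : T -> T) : Prop :=
  (forall x, B x -> B (d x)) /\
  (forall (c : k) x y, B x -> B y -> d (c *: x + y) = c *: d x + d y) /\
  (forall x y, B x -> B y -> d (mulT x y) = mulT (d x) y + mulT x (d y)).

From HB Require Import structures.
From mathcomp Require Import all_boot all_order all_algebra.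
From mathcomp Require Import zify.
Set Implicit Arguments. Unset Strict Implicit. Unset Printing Implicit Defensive.
Import GRing.Theory.
Local Open Scope ring_scope.

(* Put X = a (x) u^-s b and v = u^m. Since omega^m = 1, v is sigma_2-invariant,
   so X and v X both lie in the fixed-point subalgebra, and the bracket of the
   statement is u^s (v^-1 d(v X) - d X). Applying d to (v X) Y = X (v Y) and
   cancelling v shows that delta(X) := v^-1 d(v X) - d X satisfies
   delta(X) Y = X delta(Y); the three identities follow by moving powers of u
   out of the products. The S-action is only known on pure tensors, so its
   module laws are established on the span of the pure tensors, which contains
   the fixed-point subalgebra. *)

Section LinearMaps.
Variables (k : fieldType) (U V W : lmodType k).

Lemma lin0 (f : U -> V) : lin f -> f 0 = 0.
Proof.
move=> f_lin; have := f_lin 1 0 0; rewrite !scale1r addr0 => f00.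
by apply: (@addrI _ (f 0)); rewrite addr0 -f00.
Qed.

Lemma linD (f : U -> V) x y : lin f -> f (x + y) = f x + f y.
Proof. by move=> f_lin; have := f_lin 1 x y; rewrite !scale1r. Qed.

Lemma linB (f : U -> V) x y : lin f -> f (x - y) = f x - f y.
Proof.
move=> f_lin; have := f_lin (-1) y 0.
by rewrite addr0 lin0 // addr0 !scaleN1r linD // => ->.
Qed.

Lemma lin_sum (f : U -> V) (I : Type) (r : seq I) (F : I -> U) :
  lin f -> f (\sum_(i <- r) F i) = \sum_(i <- r) f (F i).
Proof.
move=> f_lin; elim: r => [|x r IHr]; first by rewrite !big_nil lin0.
by rewrite !big_cons linD // IHr.
Qed.

Lemma lin_comp (f : V -> W) (g : U -> V) : lin f -> lin g -> lin (fun x => f (g x)).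
Proof. by move=> f_lin g_lin c x y; rewrite g_lin f_lin. Qed.

End LinearMaps.

Section Homogeneous.
Variables (k : fieldType) (S : comUnitAlgType k) (s2 : S -> S) (omega : k).
Hypothesis s2M : forall x y, s2 (x * y) = s2 x * s2 y.
Hypothesis s2_1 : s2 1 = 1.
Hypothesis omega_neq0 : omega != 0.

Lemma homog1 : homog s2 omega 0 1.
Proof. by rewrite /homog s2_1 expr0z scale1r. Qed.

Lemma homogM z1 z2 x y :
  homog s2 omega z1 x -> homog s2 omega z2 y -> homog s2 omega (z1 + z2) (x * y).
Proof.
rewrite /homog s2M => -> ->.
by rewrite expfzDr // -scalerAl -scalerAr scalerA.
Qed.

Lemma homogV z x :
  x \is a GRing.unit -> homog s2 omega z x -> homog s2 omega (- z) x^-1.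
Proof.
move=> x_unit x_homog; rewrite /homog -invr_expz.
have xV : s2 x * ((omega ^ z)^-1 *: x^-1) = 1.
  rewrite x_homog -scalerAl -scalerAr scalerA mulfV ?expfz_neq0 //.
  by rewrite scale1r mulrV.
by rewrite -[s2 x^-1]mulr1 -xV mulrA -s2M mulVr // s2_1 mul1r.
Qed.

Lemma homog_exprz z x :
  x \is a GRing.unit -> homog s2 omega 1 x -> homog s2 omega z (x ^ z).
Proof.
move=> x_unit x_homog.
have homogX (n : nat) : homog s2 omega n (x ^+ n).
  elim: n => [|n IHn]; first exact: homog1.
  by rewrite exprS intS; apply: homogM.
case: z => n; first exact: homogX.
by rewrite NegzE; apply: homogV; [rewrite unitrX | apply: homogX].
Qed.

Lemma homog_period (m : nat) z x :
  omega ^+ m = 1 -> homog s2 omega (z + m%:Z) x = homog s2 omega z x.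
Proof. by move=> omega_m; rewrite /homog expfzDr // [omega ^ m%:Z]omega_m mulr1. Qed.

End Homogeneous.

Section TensorAlgebra.
Variables (k : fieldType) (A : lmodType k) (S : comUnitAlgType k) (T : lmodType k).
Variables (tens : A -> S -> T) (mulA : A -> A -> A).
Variables (mulT : T -> T -> T) (actT : S -> T -> T).
Hypothesis tens_bilin : bilin tens.
Hypothesis mulT_bilin : bilin mulT.
Hypothesis mulT_tens :
  forall a a' s s', mulT (tens a s) (tens a' s') = tens (mulA a a') (s * s').
Hypothesis actT_lin : forall s, lin (actT s).
Hypothesis actT_tens : forall s' a s, actT s' (tens a s) = tens a (s * s').

Definition tensor_span (x : T) : Prop :=
  exists r : seq (A * S), x = \sum_(p <- r) tens p.1 p.2.

Lemma span_tens a b : tensor_span (tens a b).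
Proof. by exists [:: (a, b)]; rewrite big_seq1. Qed.

Lemma span_sub x y : tensor_span x -> tensor_span y -> tensor_span (x - y).
Proof.
move=> [r ->] [r' ->]; exists (r ++ [seq (- p.1, p.2) | p <- r']).
rewrite big_cat big_map -sumrN /=; congr (_ + _); apply: eq_bigr => p _.
by rewrite -[- p.1]sub0r (linB _ _ (tens_bilin.1 _)) (lin0 (tens_bilin.1 _)) sub0r.
Qed.

Lemma span_act s x : tensor_span x -> tensor_span (actT s x).
Proof.
move=> [r ->]; exists [seq (p.1, p.2 * s) | p <- r].
by rewrite big_map lin_sum //; apply: eq_bigr => p _.
Qed.

Lemma span_mul x y : tensor_span x -> tensor_span y -> tensor_span (mulT x y).
Proof.
move=> [r ->] [r' ->].
exists [seq (mulA p.1 q.1, p.2 * q.2) | p <- r, q <- r'].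
rewrite big_allpairs_dep (lin_sum _ _ (mulT_bilin.1 _)); apply: eq_bigr => p _.
by rewrite (lin_sum _ _ (mulT_bilin.2 _)); apply: eq_bigr => q _.
Qed.

Lemma lin_eq_on_span (W : lmodType k) (f g : T -> W) x :
  lin f -> lin g -> (forall a b, f (tens a b) = g (tens a b)) ->
  tensor_span x -> f x = g x.
Proof.
move=> f_lin g_lin fg [r ->]; rewrite !lin_sum //.
by apply: eq_bigr => p _.
Qed.

Lemma act1 x : tensor_span x -> actT 1 x = x.
Proof.
move=> x_span; apply: (lin_eq_on_span (g := id) _ _ _ x_span) => // a b.
by rewrite actT_tens mulr1.
Qed.

Lemma actA s s' x : tensor_span x -> actT s (actT s' x) = actT (s' * s) x.
Proof.
apply: (lin_eq_on_span (f := fun x => actT s (actT s' x))) => [||a b].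
- exact: lin_comp.
- exact: actT_lin.
by rewrite !actT_tens mulrA.
Qed.

Lemma actK s x : s \is a GRing.unit -> tensor_span x -> actT s^-1 (actT s x) = x.
Proof. by move=> s_unit x_span; rewrite actA // mulrV // act1. Qed.

Lemma mul_actl s x y :
  tensor_span x -> tensor_span y -> mulT (actT s x) y = actT s (mulT x y).
Proof.
move=> x_span y_span.
apply: (lin_eq_on_span (f := fun x => mulT (actT s x) y)
                       (g := fun x => actT s (mulT x y)) _ _ _ x_span) => [||a b].
- exact: lin_comp (mulT_bilin.1 y) (actT_lin s).
- exact: lin_comp (actT_lin s) (mulT_bilin.1 y).
apply: (lin_eq_on_span (f := fun y => mulT (actT s (tens a b)) y)
                       (g := fun y => actT s (mulT (tens a b) y)) _ _ _ y_span).
- exact: mulT_bilin.2.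
- exact: lin_comp (actT_lin s) (mulT_bilin.2 _).
by move=> a' b'; rewrite !actT_tens !mulT_tens actT_tens mulrAC.
Qed.

Lemma mul_actr s x y :
  tensor_span x -> tensor_span y -> mulT x (actT s y) = actT s (mulT x y).
Proof.
move=> x_span y_span.
apply: (lin_eq_on_span (f := fun x => mulT x (actT s y))
                       (g := fun x => actT s (mulT x y)) _ _ _ x_span) => [||a b].
- exact: mulT_bilin.1.
- exact: lin_comp (actT_lin s) (mulT_bilin.1 y).
apply: (lin_eq_on_span (f := fun y => mulT (tens a b) (actT s y))
                       (g := fun y => actT s (mulT (tens a b) y)) _ _ _ y_span).
- exact: lin_comp (mulT_bilin.2 _) (actT_lin s).
- exact: lin_comp (actT_lin s) (mulT_bilin.2 _).
by move=> a' b'; rewrite !actT_tens !mulT_tens mulrA.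
Qed.

Section TwistDefect.
Variables (B : T -> Prop) (d : T -> T) (v : S).
Hypothesis B_span : forall x, B x -> tensor_span x.
Hypothesis d_der : is_der_on mulT B d.

Definition twist_defect (x : T) : T := actT v^-1 (d (actT v x)) - d x.

Lemma span_twist_defect x : B x -> B (actT v x) -> tensor_span (twist_defect x).
Proof.
move=> Bx Bvx; have [dB _] := d_der.
by apply: span_sub; [apply: span_act |]; apply/B_span/dB.
Qed.

Lemma twist_defect_balanced x y :
  v \is a GRing.unit -> B x -> B y -> B (actT v x) -> B (actT v y) ->
  mulT (twist_defect x) y = mulT x (twist_defect y).
Proof.
move=> v_unit Bx By Bvx Bvy; have [dB [_ leibniz]] := d_der.
have [x_span y_span] := (B_span Bx, B_span By).
have [dx_span dy_span] := (B_span (dB _ Bx), B_span (dB _ By)).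
have [dvx_span dvy_span] := (B_span (dB _ Bvx), B_span (dB _ Bvy)).
have shift : mulT (actT v x) y = mulT x (actT v y) by rewrite mul_actl ?mul_actr.
have := congr1 d shift; rewrite !leibniz // mul_actl // mul_actr // => d_shift.
rewrite /twist_defect (linB _ _ (mulT_bilin.1 _)) (linB _ _ (mulT_bilin.2 _)).
rewrite mul_actl // mul_actr //.
have -> : mulT x (d (actT v y)) =
    mulT (d (actT v x)) y + actT v (mulT x (d y)) - actT v (mulT (d x) y).
  by rewrite d_shift addrAC subrr add0r.
have [dxy_span xdy_span] := (span_mul dx_span y_span, span_mul x_span dy_span).
by rewrite linB // linD // !actK // addrAC addrK.
Qed.

End TwistDefect.

Section DerBracket.
Variables (m : nat) (omega : k) (s1 : A -> A) (s2 : S -> S) (u : S) (d : T -> T).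
Hypothesis omega_m : omega ^+ m = 1.
Hypothesis omega_neq0 : omega != 0.
Hypothesis s2M : forall x y, s2 (x * y) = s2 x * s2 y.
Hypothesis s2_1 : s2 1 = 1.
Hypothesis u_unit : u \is a GRing.unit.
Hypothesis u_homog : homog s2 omega 1 u.
Hypothesis d_der : is_der_on mulT (in_fixed tens s1 s2 omega) d.

Local Notation fixed := (in_fixed tens s1 s2 omega).

Lemma fixed_span x : fixed x -> tensor_span x.
Proof.
by move=> [r [_ ->]]; exists [seq (p.1.2, p.2) | p <- r]; rewrite big_map.
Qed.

Lemma fixed_tens z a b :
  homog s1 omega z a -> homog s2 omega (- z) b -> fixed (tens a b).
Proof.
move=> a_homog b_homog; exists [:: (- z, a, b)]; rewrite big_seq1.
by split=> // p; rewrite inE => /eqP -> /=; rewrite opprK.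
Qed.

Lemma fixed_tens_twist i s a b :
  homog s1 omega i a -> homog s2 omega (- i + s) b -> fixed (tens a (u ^ (- s) * b)).
Proof.
move=> a_homog b_homog; apply: (fixed_tens a_homog).
have u_homog_s := homog_exprz s2M s2_1 omega_neq0 (- s) u_unit u_homog.
have := homogM s2M omega_neq0 u_homog_s b_homog.
by have -> : - s + (- i + s) = - i by lia.
Qed.

Lemma act_period_twist s a b :
  actT (u ^+ m) (tens a (u ^ (- s) * b)) = tens a (u ^ (- s + m%:Z) * b).
Proof. by rewrite actT_tens mulrAC exprzDr. Qed.

Lemma fixed_act_period_twist i s a b :
  homog s1 omega i a -> homog s2 omega (- i + s) b ->
  fixed (actT (u ^+ m) (tens a (u ^ (- s) * b))).
Proof.
move=> a_homog b_homog; rewrite act_period_twist.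
have -> : - s + m%:Z = - (s - m%:Z) by lia.
apply: (fixed_tens_twist a_homog).
by rewrite -(homog_period _ _ _ _ omega_m) // -addrA subrK.
Qed.

Definition der_bracket (s : int) (a : A) (b : S) : T :=
  actT (u ^ (- (m%:Z) + s)) (d (tens a (u ^ (- s + m%:Z) * b)))
  - actT (u ^ s) (d (tens a (u ^ (- s) * b))).

Lemma der_bracketE i s a b :
  homog s1 omega i a -> homog s2 omega (- i + s) b ->
  der_bracket s a b = actT (u ^ s) (twist_defect d (u ^+ m) (tens a (u ^ (- s) * b))).
Proof.
move=> a_homog b_homog; have [d_fixed _] := d_der.
have := fixed_span (d_fixed _ (fixed_act_period_twist a_homog b_homog)).
rewrite /twist_defect act_period_twist => dX'_span.
by rewrite linB // actA // exprnN -exprzDr.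
Qed.

Lemma span_der_bracket i s a b :
  homog s1 omega i a -> homog s2 omega (- i + s) b -> tensor_span (der_bracket s a b).
Proof.
move=> a_homog b_homog; rewrite (der_bracketE a_homog b_homog).
apply/span_act/(span_twist_defect fixed_span d_der).
  exact: fixed_tens_twist a_homog b_homog.
exact: fixed_act_period_twist a_homog b_homog.
Qed.

Lemma der_bracket_balanced i j s t ai aj bi bj :
  homog s1 omega i ai -> homog s1 omega j aj ->
  homog s2 omega (- i + s) bi -> homog s2 omega (- j + t) bj ->
  mulT (der_bracket s ai bi) (tens aj bj) = mulT (tens ai bi) (der_bracket t aj bj).
Proof.
move=> ai_homog aj_homog bi_homog bj_homog.
have untwist z a b : tens a b = actT (u ^ z) (tens a (u ^ (- z) * b)).
  by rewrite actT_tens mulrAC -exprzDr // addNr expr0z mul1r.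
rewrite (der_bracketE ai_homog bi_homog) (der_bracketE aj_homog bj_homog).
rewrite (untwist s ai bi) (untwist t aj bj).
set X := tens ai _; set Y := tens aj _.
have X_fixed : fixed X := fixed_tens_twist ai_homog bi_homog.
have Y_fixed : fixed Y := fixed_tens_twist aj_homog bj_homog.
have uX_fixed : fixed (actT (u ^+ m) X) := fixed_act_period_twist ai_homog bi_homog.
have uY_fixed : fixed (actT (u ^+ m) Y) := fixed_act_period_twist aj_homog bj_homog.
have [X_span Y_span] := (fixed_span X_fixed, fixed_span Y_fixed).
have dX_span := span_twist_defect fixed_span d_der X_fixed uX_fixed.
have dY_span := span_twist_defect fixed_span d_der Y_fixed uY_fixed.
have [uY_span udY_span] := (span_act (u ^ t) Y_span, span_act (u ^ t) dY_span).
rewrite !mul_actl // !mul_actr //; congr (actT _ (actT _ _)).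
by apply: (twist_defect_balanced fixed_span d_der); rewrite ?unitrX.
Qed.

Lemma der_bracket_unit_balanced i j ai aj :
  homog s1 omega i ai -> homog s1 omega j aj ->
  mulT (tens ai (u ^ (- i))) (actT (u ^ (- j)) (der_bracket j aj 1))
  = mulT (actT (u ^ (- i)) (der_bracket i ai 1)) (tens aj (u ^ (- j))).
Proof.
move=> ai_homog aj_homog.
have one_homog z : homog s2 omega (- z + z) 1 by rewrite addNr; exact: homog1.
have Di_span := span_der_bracket ai_homog (one_homog i).
have Dj_span := span_der_bracket aj_homog (one_homog j).
have [ai_span aj_span] := (span_tens ai 1, span_tens aj 1).
have [uDj_span uaj_span] := (span_act (u ^ (- j)) Dj_span, span_act (u ^ (- j)) aj_span).
have act_unit z a : tens a (u ^ (- z)) = actT (u ^ (- z)) (tens a 1).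
  by rewrite actT_tens mul1r.
rewrite !act_unit !mul_actl // !mul_actr //.
by rewrite (der_bracket_balanced ai_homog aj_homog (one_homog i) (one_homog j)).
Qed.

End DerBracket.

End TensorAlgebra.

Theorem lemma4p7 (k : fieldType) (m : nat) (omega : k)
  (Hm : (0 < m)%N) (Homega : m.-primitive_root omega) (Hchar : (m%:R : k) != 0)
  (A : lmodType k) (mulA : A -> A -> A) (HmulA : bilin mulA) (Hperf : perfect mulA)
  (S : comUnitAlgType k)
  (s1 : A -> A) (s2 : S -> S)
  (Hs1 : is_alg_aut mulA s1) (Hs2 : is_unital_alg_aut s2)
  (Hs1m : forall a, iter m s1 a = a) (Hs2m : forall b, iter m s2 b = b)
  (u : S) (Hu1 : homog s2 omega 1 u) (Hu : u \is a GRing.unit)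
  (T : lmodType k) (tens : A -> S -> T) (Htens : is_tensor_product tens)
  (mulT : T -> T -> T) (HmulT : bilin mulT)
  (HmulT_tens : forall a a' s s', mulT (tens a s) (tens a' s') = tens (mulA a a') (s * s'))
  (actT : S -> T -> T) (HactT_lin : forall s, lin (actT s))
  (HactT_tens : forall s' a s, actT s' (tens a s) = tens a (s * s'))
  (d : T -> T) (Hd : is_der_on mulT (in_fixed tens s1 s2 omega) d) :
  (forall (i j s t : int) (ai aj : A) (bi bj : S),
     homog s1 omega i ai -> homog s1 omega j aj ->
     homog s2 omega (- i + s) bi -> homog s2 omega (- j + t) bj ->
     mulT (actT (u ^ (- (m%:Z) + s)) (d (tens ai (u ^ (- s + m%:Z) * bi)))
           - actT (u ^ s) (d (tens ai (u ^ (- s) * bi))))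
          (tens aj bj)
     = mulT (tens ai bi)
          (actT (u ^ (- (m%:Z) + t)) (d (tens aj (u ^ (- t + m%:Z) * bj)))
           - actT (u ^ t) (d (tens aj (u ^ (- t) * bj)))))
  /\
  (forall (i j : int) (ai aj : A),
     homog s1 omega i ai -> homog s1 omega j aj ->
     mulT (tens ai (u ^ (- i)))
          (actT (u ^ (- j))
             (actT (u ^ (- (m%:Z) + j)) (d (tens aj (u ^ (- j + m%:Z))))
              - actT (u ^ j) (d (tens aj (u ^ (- j))))))
     = mulT (actT (u ^ (- i))
             (actT (u ^ (- (m%:Z) + i)) (d (tens ai (u ^ (- i + m%:Z))))
              - actT (u ^ i) (d (tens ai (u ^ (- i))))))
          (tens aj (u ^ (- j))))
  /\
  (forall (i j t : int) (ai aj : A) (bj : S),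
     homog s1 omega i ai -> homog s1 omega j aj ->
     homog s2 omega (- j + t) bj ->
     mulT (tens ai 1)
          (actT (u ^ (- (m%:Z) + t)) (d (tens aj (u ^ (- t + m%:Z) * bj)))
           - actT (u ^ t) (d (tens aj (u ^ (- t) * bj))))
     = mulT (actT (u ^ (- (m%:Z) + i)) (d (tens ai (u ^ (- i + m%:Z))))
             - actT (u ^ i) (d (tens ai (u ^ (- i)))))
          (tens aj bj)).
Proof.
have [_ [_ [s2M s2_1]]] := Hs2.
have omega_m := prim_expr_order Homega.
have omega_neq0 : omega != 0 by rewrite (prim_root_eq0 Homega) -lt0n.
have one_homog z : homog s2 omega (- z + z) 1 by rewrite addNr; exact: homog1.
have balanced := der_bracket_balanced Htens.1 HmulT HmulT_tens HactT_lin HactT_tens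
  omega_m omega_neq0 s2M s2_1 Hu Hu1 Hd.
split; first exact: balanced.
split=> [i j ai aj ai_homog aj_homog | i j t ai aj bj ai_homog aj_homog bj_homog].
- have := der_bracket_unit_balanced Htens.1 HmulT HmulT_tens HactT_lin HactT_tens
    omega_m omega_neq0 s2M s2_1 Hu Hu1 Hd ai_homog aj_homog.
  by rewrite /der_bracket !mulr1.
- have := balanced _ _ _ _ _ _ _ _ ai_homog aj_homog (one_homog i) bj_homog.
  by rewrite /der_bracket !mulr1 => ->.
Qed.
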